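(* Under the standing assumptions below, let $\lambda\in c_H$ and suppose $k(\lambda)$ is well defined and belongs to $\ell^q$ for some $1\le q<\infty$. Then $\lim_{N\to\infty}\|k(\lambda;N)-k(\lambda)\|_{\ell^q}=0$.
   Context: Standing assumptions: $a=(a_n)$ strictly decreasing positive reals with $a_n\to0$; $b_n\ne0$ for all $n$. $c_H:=\{(\lambda_n)\in c_0\mid\operatorname{re}\lambda_n\le0\ \forall n\}$. $k_n(\lambda):=-\frac{a_n-\lambda_n}{b_n}\prod_{m\ge1,\,m\neq n}\frac{1-\lambda_m/a_n}{1-a_m/a_n}$. For $N\in\mathbb{N}$, $k(\lambda;N)$ is the eventually zero sequence with $k_n(\lambda;N):=-\frac{a_n-\lambda_n}{b_n}\prod_{m=1,\,m\ne n}^N\frac{1-\lambda_m/a_n}{1-a_m/a_n}$ for $1\le n\le N$ and $k_n(\lambda;N):=0$ for $n>N$. *)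

From Stdlib Require Import Reals.
From Coquelicot Require Import Coquelicot.
Open Scope R_scope.

(* Sequences are indexed from 0 (index n here = index n+1 in the paper). *)

(* |x|^q for x >= 0 and real q >= 1, with the convention 0^q = 0. *)
Definition rpow (x q : R) : R := if Req_EM_T x 0 then 0 else Rpower x q.

Definition in_cH (lam : nat -> C) : Prop :=
  filterlim lam eventually (locally (RtoC 0)) /\ forall n, Re (lam n) <= 0.

Fixpoint prodC (f : nat -> C) (N : nat) : C :=
  match N with
  | O => RtoC 1
  | S N' => Cmult (prodC f N') (f N')
  end.

Definition kfactor (a : nat -> R) (lam : nat -> C) (n m : nat) : C :=
  if Nat.eqb m n then RtoC 1
  else Cdiv (Cminus (RtoC 1) (Cdiv (lam m) (RtoC (a n))))
            (Cminus (RtoC 1) (RtoC (a m / a n))).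

Definition partial_prod (a : nat -> R) (lam : nat -> C) (n N : nat) : C :=
  prodC (kfactor a lam n) N.

Definition kpre (a : nat -> R) (b lam : nat -> C) (n : nat) : C :=
  Copp (Cdiv (Cminus (RtoC (a n)) (lam n)) (b n)).

Definition kN (a : nat -> R) (b lam : nat -> C) (N n : nat) : C :=
  if Nat.ltb n N then Cmult (kpre a b lam n) (partial_prod a lam n N)
  else RtoC 0.

Definition in_lq (q : R) (x : nat -> C) : Prop :=
  ex_series (fun n => rpow (Cmod (x n)) q).
Definition lq_norm (q : R) (x : nat -> C) : R :=
  rpow (Series (fun n => rpow (Cmod (x n)) q)) (/ q).

(* For m > n we have Re (1 - lam_m / a_n) >= 1 and 0 < 1 - a_m / a_n < 1, so
   every factor of the partial product of k_n(lam) beyond index n has modulus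
   at least 1.  Hence the modulus of the partial product increases with N and
   is bounded by that of its limit, which gives |k_n(lam;N) - k_n(lam)| <=
   2 |k_n(lam)|.  The q-th powers of these differences thus have the summable
   majorant 2^q |k_n(lam)|^q and tend to 0 for each fixed n, so dominated
   convergence for series shows that ||k(lam;N) - k(lam)||_q^q tends to 0. *)

From Stdlib Require Import Reals Lra Lia.
From Coquelicot Require Import Coquelicot.
Open Scope R_scope.

Lemma rpow_ge0 x q : 0 <= rpow x q.
Proof.
  unfold rpow; destruct (Req_EM_T x 0); [lra|].
  left; apply exp_pos.
Qed.

Lemma rpow_le x y q : 0 <= x <= y -> 0 <= q -> rpow x q <= rpow y q.
Proof.
  intros [Hx Hxy] Hq; unfold rpow.
  destruct (Req_EM_T x 0), (Req_EM_T y 0); try lra.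
  - left; apply exp_pos.
  - apply Rle_Rpower_l; lra.
Qed.

Lemma rpow_mult_l c x q : 0 < c -> 0 <= x -> rpow (c * x) q = Rpower c q * rpow x q.
Proof.
  intros Hc Hx; unfold rpow.
  destruct (Req_EM_T x 0) as [->|Hx0].
  - rewrite Rmult_0_r; destruct (Req_EM_T 0 0); [ring|lra].
  - destruct (Req_EM_T (c * x) 0) as [Hcx|_].
    + apply Rmult_integral in Hcx; lra.
    + rewrite Rpower_mult_distr; lra.
Qed.

Lemma is_lim_seq_rpow_0 (u : nat -> R) p :
  0 < p -> (forall N, 0 <= u N) -> is_lim_seq u 0 ->
  is_lim_seq (fun N => rpow (u N) p) 0.
Proof.
  intros Hp Hu Hlim; apply is_lim_seq_spec; apply is_lim_seq_spec in Hlim.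
  intros eps.
  set (d := Rpower (eps / 2) (/ p)).
  assert (Hd : 0 < d) by apply exp_pos.
  destruct (Hlim (mkposreal d Hd)) as [N0 HN0]; exists N0; intros N HN.
  specialize (HN0 N HN); simpl in HN0.
  rewrite Rminus_0_r, Rabs_pos_eq in HN0 by apply Hu.
  rewrite Rminus_0_r, Rabs_pos_eq by apply rpow_ge0.
  pose proof (cond_pos eps).
  unfold rpow; destruct (Req_EM_T (u N) 0); [lra|].
  
  assert (Hdp : Rpower d p = eps / 2).
  { unfold d; rewrite Rpower_mult, Rinv_l, Rpower_1; lra. }
  assert (Rpower (u N) p <= Rpower d p) by (apply Rle_Rpower_l; [|specialize (Hu N)]; lra).
  lra.
Qed.

Lemma Series_ge0 (f : nat -> R) : (forall n, 0 <= f n) -> ex_series f -> 0 <= Series f.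
Proof.
  intros Hf Hex.
  assert (Hzero : Series (fun _ => 0) = 0).
  { transitivity (Series (fun _ => 0 * 0)); [apply Series_ext; intros; ring|].
    rewrite Series_scal_l; ring. }
  rewrite <- Hzero; apply Series_le; [intros n; split; [lra|apply Hf]|exact Hex].
Qed.

Lemma is_lim_seq_sum_f_R0_0 (f : nat -> nat -> R) M :
  (forall n, is_lim_seq (fun N => f N n) 0) ->
  is_lim_seq (fun N => sum_f_R0 (f N) M) 0.
Proof.
  intros Hf; induction M as [|M IH]; simpl; [apply Hf|].
  replace (Finite 0) with (Finite (0 + 0)) by (f_equal; ring).
  apply is_lim_seq_plus'; auto.
Qed.

(* Cut off the tail of the majorant; the finitely many remaining terms tend to 0. *)
Lemma is_lim_seq_Series_dominated (f : nat -> nat -> R) (g : nat -> R) :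
  (forall N n, 0 <= f N n <= g n) -> ex_series g ->
  (forall n, is_lim_seq (fun N => f N n) 0) ->
  is_lim_seq (fun N => Series (f N)) 0.
Proof.
  intros Hfg Hg Hlim.
  assert (Hf : forall N, ex_series (f N)).
  { intros N; apply (ex_series_le (V := R_CompleteNormedModule)) with g; auto.
    intros n; change (Rabs (f N n) <= g n); rewrite Rabs_pos_eq; apply Hfg. }
  apply is_lim_seq_spec; intros eps.
  assert (He2 : 0 < eps / 2) by (pose proof (cond_pos eps); lra).
  destruct (proj1 (filterlim_locally _ _) (Series_correct _ Hg) (mkposreal _ He2))
    as [M HM].
  specialize (HM M (Nat.le_refl _)).
  change (Rabs (sum_n g M - Series g) < eps / 2) in HM; rewrite sum_n_Reals in HM.
  pose proof (Series_incr_n g (S M) ltac:(lia) Hg) as Hg_split; simpl in Hg_split.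
  destruct (proj2 (is_lim_seq_spec _ _) (is_lim_seq_sum_f_R0_0 f M Hlim) (mkposreal _ He2))
    as [N0 HN0].
  exists N0; intros N HN; specialize (HN0 N HN); simpl in HN0.
  pose proof (Series_incr_n (f N) (S M) ltac:(lia) (Hf N)) as Hf_split; simpl in Hf_split.
  assert (Htail : Series (fun k => f N (S (M + k))) <= Series (fun k => g (S (M + k)))).
  { apply Series_le; [intros; apply Hfg|apply (ex_series_incr_n g (S M)), Hg]. }
  assert (Hhead : 0 <= sum_f_R0 (f N) M) by (apply cond_pos_sum; intros; apply Hfg).
  assert (HSf : 0 <= Series (f N)) by (apply Series_ge0; [intros; apply Hfg|apply Hf]).
  rewrite Rminus_0_r in HN0 |- *; rewrite Rabs_pos_eq by exact HSf.
  rewrite Rabs_pos_eq in HN0 by exact Hhead.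
  apply Rabs_def2 in HM; lra.
Qed.

Lemma is_lim_seq_Cmod (u : nat -> C) (l : C) :
  filterlim u eventually (locally l) -> is_lim_seq (fun N => Cmod (u N)) (Cmod l).
Proof.
  intros Hu; exact (filterlim_comp _ _ _ _ _ _ _ _ Hu (filterlim_norm (V := C_NormedModule) l)).
Qed.

Lemma filterlim_affine_C (u : nat -> C) (l c d : C) :
  filterlim u eventually (locally l) ->
  filterlim (fun N => c * u N + d)%C eventually (locally (c * l + d)%C).
Proof.
  intros Hu; eapply (filterlim_comp_2 (fun N => c * u N)%C (fun _ => d) Cplus).
  - exact (filterlim_comp _ _ _ _ _ _ _ _ Hu (filterlim_scal_r (V := C_NormedModule) c l)).
  - apply filterlim_const.
  - exact (filterlim_plus (V := C_NormedModule) (c * l)%C d).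
Qed.

Lemma decreasing_lt (u : nat -> R) :
  (forall n, u (S n) < u n) -> forall n m, (n < m)%nat -> u m < u n.
Proof.
  intros Hu n m Hnm; induction Hnm as [|m _ IH]; [apply Hu|specialize (Hu m); lra].
Qed.

Lemma Re_one_minus_div_ge1 (z : C) (r : R) :
  0 < r -> Re z <= 0 -> 1 <= Re (RtoC 1 - z / RtoC r)%C.
Proof.
  intros Hr; destruct z as [x y]; simpl; intros Hx.
  unfold Cminus, Cdiv, Cmult, Cinv, Cplus, Copp, RtoC; simpl.
  replace (x * (r / (r * (r * 1) + 0 * (0 * 1))) - y * (- 0 / (r * (r * 1) + 0 * (0 * 1))))
    with (x / r) by (field; lra).
  assert (x / r <= 0) by (apply Rmult_le_0_r; [|left; apply Rinv_0_lt_compat]; lra).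
  lra.
Qed.

Section PartialProducts.

Variables (a : nat -> R) (b lam : nat -> C).
Hypothesis ha_pos : forall n, 0 < a n.
Hypothesis ha_dec : forall n, a (S n) < a n.
Hypothesis hlam_Re : forall n, Re (lam n) <= 0.

Lemma Cmod_kfactor_ge1 n m : (n <= m)%nat -> 1 <= Cmod (kfactor a lam n m).
Proof.
  intros Hnm; unfold kfactor.
  destruct (Nat.eqb_spec m n) as [_|Hmn]; [rewrite Cmod_1; lra|].
  pose proof (decreasing_lt a ha_dec n m ltac:(lia)) as Ham.
  pose proof (ha_pos n); pose proof (ha_pos m).
  assert (Hratio : 0 < a m / a n < 1).
  { split; [apply Rdiv_lt_0_compat|apply Rlt_div_l]; lra. }
  rewrite <- RtoC_minus, Cmod_div, Cmod_R, Rabs_pos_eq by (try (intros E; apply RtoC_inj in E); lra).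
  assert (Hnum : 1 <= Cmod (RtoC 1 - lam m / RtoC (a n))%C).
  { eapply Rle_trans; [apply Re_one_minus_div_ge1; auto|].
    eapply Rle_trans; [apply Rle_abs|apply re_le_Cmod]. }
  apply Rle_div_r; lra.
Qed.

Lemma Cmod_partial_prod_le n N M :
  (n <= N <= M)%nat -> Cmod (partial_prod a lam n N) <= Cmod (partial_prod a lam n M).
Proof.
  intros [HnN HNM]; induction HNM as [|M HNM IH]; [lra|].
  unfold partial_prod in *; simpl; rewrite Cmod_mult.
  pose proof (Cmod_kfactor_ge1 n M ltac:(lia)).
  pose proof (Cmod_ge_0 (prodC (kfactor a lam n) M)); nra.
Qed.

Lemma Cmod_partial_prod_le_lim (P : C) n N :
  (n <= N)%nat -> filterlim (partial_prod a lam n) eventually (locally P) ->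
  Cmod (partial_prod a lam n N) <= Cmod P.
Proof.
  intros HnN HP.
  pose proof (proj1 (is_lim_seq_incr_n _ N _) (is_lim_seq_Cmod _ _ HP)) as Hlim.
  assert (Hmono : forall k, Cmod (partial_prod a lam n N) <= Cmod (partial_prod a lam n (k + N))).
  { intros k; apply Cmod_partial_prod_le; lia. }
  exact (is_lim_seq_le _ _ _ _ Hmono (is_lim_seq_const _) Hlim).
Qed.

Variable P : nat -> C.
Hypothesis hP : forall n, filterlim (partial_prod a lam n) eventually (locally (P n)).

Let k n := (kpre a b lam n * P n)%C.

Lemma Cmod_kN_sub_le N n : Cmod (kN a b lam N n - k n)%C <= 2 * Cmod (k n).
Proof.
  unfold kN, k; destruct (Nat.ltb_spec n N) as [HnN|_].
  - replace (kpre a b lam n * partial_prod a lam n N - kpre a b lam n * P n)%C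
      with (kpre a b lam n * (partial_prod a lam n N - P n))%C by ring.
    rewrite !Cmod_mult.
    assert (Htri : Cmod (partial_prod a lam n N - P n)%C <= Cmod (partial_prod a lam n N) + Cmod (P n)).
    { unfold Cminus; rewrite <- (Cmod_opp (P n)); apply Cmod_triangle. }
    pose proof (Cmod_partial_prod_le_lim (P n) n N ltac:(lia) (hP n)).
    pose proof (Cmod_ge_0 (kpre a b lam n)); nra.
  - replace (RtoC 0 - kpre a b lam n * P n)%C with (- (kpre a b lam n * P n))%C by ring.
    rewrite Cmod_opp; pose proof (Cmod_ge_0 (kpre a b lam n * P n)); lra.
Qed.

Lemma is_lim_seq_Cmod_kN_sub n : is_lim_seq (fun N => Cmod (kN a b lam N n - k n)%C) 0.
Proof.
  rewrite <- Cmod_0.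
  apply is_lim_seq_Cmod, filterlim_ext_loc with
    (fun N => kpre a b lam n * partial_prod a lam n N + - k n)%C.
  - exists (S n); intros N HN; unfold kN.
    destruct (Nat.ltb_spec n N); [reflexivity|lia].
  - replace (RtoC 0) with (kpre a b lam n * P n + - k n)%C by (unfold k; ring).
    apply filterlim_affine_C, hP.
Qed.

End PartialProducts.

Theorem proposition1
  (a : nat -> R) (b : nat -> C) (lam : nat -> C) (P : nat -> C) (q : R)
  (ha_pos : forall n, 0 < a n)
  (ha_dec : forall n, a (S n) < a n)
  (ha_lim : is_lim_seq a 0)
  (hb : forall n, b n <> RtoC 0)
  (hlam : in_cH lam)
  (hP : forall n, filterlim (fun N => partial_prod a lam n N) eventually (locally (P n)))
  (hq : 1 <= q)
  (hk : in_lq q (fun n => Cmult (kpre a b lam n) (P n))) :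
  is_lim_seq
    (fun N => lq_norm q (fun n => Cminus (kN a b lam N n) (Cmult (kpre a b lam n) (P n))))
    0.
Proof.
  destruct hlam as [_ hlam_Re].
  set (f := fun N n => rpow (Cmod (kN a b lam N n - kpre a b lam n * P n)%C) q).
  set (g := fun n => Rpower 2 q * rpow (Cmod (kpre a b lam n * P n)%C) q).
  assert (Hfg : forall N n, 0 <= f N n <= g n).
  { intros N n; split; [apply rpow_ge0|]; unfold f, g.
    rewrite <- rpow_mult_l by (lra || apply Cmod_ge_0).
    apply rpow_le; [split; [apply Cmod_ge_0|apply Cmod_kN_sub_le]|]; auto; lra. }
  assert (Hg : ex_series g) by apply (ex_series_scal_l (V := R_NormedModule)), hk.
  assert (Hf_lim : forall n, is_lim_seq (fun N => f N n) 0).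
  { intros n; apply is_lim_seq_rpow_0; [lra|intros; apply Cmod_ge_0|].
    apply is_lim_seq_Cmod_kN_sub; auto. }
  unfold lq_norm; apply is_lim_seq_rpow_0; [apply Rinv_0_lt_compat; lra| |].
  - intros N; apply Series_ge0; [intros n; apply Hfg|].
    apply (ex_series_le (V := R_CompleteNormedModule)) with g; auto.
    intros n; change (Rabs (f N n) <= g n); rewrite Rabs_pos_eq; apply Hfg.
  - exact (is_lim_seq_Series_dominated f g Hfg Hg Hf_lim).
Qed.
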